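(* Let $q\ge2$, $n\ge1$, $X=\{0,\ldots,q-1\}$, and let $\mathcal{L}=\{L_1,\ldots,L_k\}$ be a partition of $X^n$ with respect to which the Insect Markov chain on $X^n$ is lumpable. Then there exists a subgroup $K\le Aut(T_{q,n})$ such that the orbits of $K$ on $X^n$ are exactly the parts $L_1,\ldots,L_k$.
   Context: $X^n$ is identified with the set of leaves (boundary) of the rooted $q$-ary tree $T_{q,n}$ of depth $n$, whose vertices are the words of length $\le n$ over $X$. $Aut(T_{q,n})$ (the iterated wreath product $Sym(q)\wr\cdots\wr Sym(q)$, $n$ factors) is the group of permutations $g$ of $X^n$ such that for all $x,y\in X^n$ and $m\le n$, $x_1\cdots x_m=y_1\cdots y_m$ iff $(gx)_1\cdots(gx)_m=(gy)_1\cdots(gy)_m$. For $x,y\in X^n$, $d(x,y)=n-\max\{m: x_1\cdots x_m=y_1\cdots y_m\}$. Set $\alpha_j=\frac{q^j-1}{q^{j+1}-1}$ for $1\le j\le n-1$, $\alpha_n=0$. The Insect Markov chain on $X^n$ has transition probabilities $p(x,y)=q^{-1}(1-\alpha_1)+\sum_{i=2}^nq^{-i}\alpha_1\cdots\alpha_{i-1}(1-\alpha_i)$ if $d(x,y)\in\{0,1\}$ and $p(x,y)=\sum_{i=j}^nq^{-i}\alpha_1\cdots\alpha_{i-1}(1-\alpha_i)$ if $d(x,y)=j>1$. A chain is lumpable with respect to a partition if for all parts $L,L'$ the map $x\mapsto\sum_{y\in L'}p(x,y)$ is constant on $L$. *)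

From HB Require Import structures.
From mathcomp Require Import all_boot all_order all_algebra all_fingroup.
Set Implicit Arguments. Unset Strict Implicit. Unset Printing Implicit Defensive.
Import Order.TTheory GRing.Theory Num.Theory.

Notation word q n := (n.-tuple 'I_q).

Definition tree_aut (q n : nat) : {set {perm word q n}} :=
  [set g : {perm word q n} | [forall x : word q n, forall y : word q n,
     forall m : 'I_n.+1,
       (take m x == take m y) == (take m (g x) == take m (g y))]].

Definition tdist (q n : nat) (x y : word q n) : nat :=
  n - \max_(m < n.+1 | take m x == take m y) m.

Section Insect.
Variables (R : realFieldType) (q n : nat).
Local Open Scope ring_scope.

Definition ialpha (j : nat) : R :=
  if (j < n)%N then ((q%:R ^+ j - 1) / (q%:R ^+ j.+1 - 1)) else 0.

Definition iterm (i : nat) : R :=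
  (q%:R ^+ i)^-1 * (\prod_(1 <= k < i) ialpha k) * (1 - ialpha i).

Definition insect_p (x y : word q n) : R :=
  let d := tdist x y in
  if (d <= 1)%N then
    (q%:R)^-1 * (1 - ialpha 1) + \sum_(2 <= i < n.+1) iterm i
  else \sum_(d <= i < n.+1) iterm i.

Definition lumpable (P : {set {set word q n}}) : Prop :=
  forall L L' : {set word q n}, L \in P -> L' \in P ->
  forall x y : word q n, x \in L -> y \in L ->
    \sum_(z in L') insect_p x z = \sum_(z in L') insect_p y z.
End Insect.

From HB Require Import structures.
From mathcomp Require Import all_boot all_order all_algebra all_fingroup.
From mathcomp Require Import zify lra.
Import Order.TTheory GRing.Theory Num.Theory.
Set Implicit Arguments. Unset Strict Implicit. Unset Printing Implicit Defensive.

(* Label each word by its block.  With E_k the average over words sharing the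
   first k letters, the Insect kernel is a combination sum_i w_i E_(n-i) with
   positive weights, so the differences D_a = E_a - E_(a-1) are eigenspaces
   with pairwise distinct eigenvalues.  Lumpability means the kernel preserves
   block-constant functions, hence so does each spectral projection D_a, and
   E_k of the indicator of a block is block-constant: the number of words of a
   given block sharing the first k letters with x depends only on the block of
   x.  For such a count-regular labelling any two words with the same label are
   exchanged by a label-preserving tree automorphism: by induction on n, the
   subtrees below two first letters carry isomorphic labellings as soon as they
   share one label, and counting shows that a permutation of the first letters
   matches the label sets of the subtrees, so the subtree isomorphisms glue.
   The orbits of the stabilizer of the labelling are therefore the blocks. *)


Section TreeAutomorphisms.
Variable q : nat.

Lemma tree_autP n (g : {perm word q n}) :
  g \in tree_aut q n <-> forall (x y : word q n) m, m <= n ->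
    (take m x == take m y) = (take m (g x) == take m (g y)).
Proof.
rewrite inE; split.
- move/forallP=> H x y m hm.
  by move/forallP: (H x) => /(_ y)/forallP/(_ (Ordinal (hm : m < n.+1)))/eqP.
- move=> H; apply/forallP=> x; apply/forallP=> y; apply/forallP=> m.
  by apply/eqP; apply: H; rewrite -ltnS.
Qed.

Lemma group_set_tree_aut n : group_set (tree_aut q n).
Proof.
apply/group_setP; split; first by apply/tree_autP => u v m _; rewrite !perm1.
move=> g h /tree_autP g_aut /tree_autP h_aut.
by apply/tree_autP => u v m hm; rewrite !permM -h_aut // -g_aut.
Qed.

Canonical tree_aut_group n := Group (group_set_tree_aut n).

Lemma behead_consE n (a : 'I_q) (w : word q n) : behead_tuple [tuple of a :: w] = w.
Proof. exact: val_inj. Qed.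

Lemma cons_tuple_inj n (a : 'I_q) : injective (fun w : word q n => [tuple of a :: w]).
Proof. by move=> w1 w2 /(congr1 val) [] /val_inj. Qed.

Definition tree_cons_fun n (s : {perm 'I_q}) (gs : 'I_q -> {perm word q n})
    (z : word q n.+1) : word q n.+1 :=
  [tuple of s (thead z) :: gs (thead z) (behead_tuple z)].

Lemma tree_cons_fun_inj n s gs : injective (@tree_cons_fun n s gs).
Proof.
move=> z1 z2; case/tupleP: z1 => a1 w1; case/tupleP: z2 => a2 w2.
rewrite /tree_cons_fun !theadE !behead_consE => /(congr1 val) [] /perm_inj <-.
by move/val_inj/perm_inj ->.
Qed.

Definition tree_cons n s gs : {perm word q n.+1} := perm (@tree_cons_fun_inj n s gs).

Lemma tree_consE n s gs c (w : word q n) :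
  tree_cons s gs [tuple of c :: w] = [tuple of s c :: gs c w].
Proof. by rewrite permE /tree_cons_fun theadE behead_consE. Qed.

Lemma tree_cons_aut n s gs :
  (forall c, gs c \in tree_aut q n) -> @tree_cons n s gs \in tree_aut q n.+1.
Proof.
move=> gs_aut; apply/tree_autP => z1 z2 [|m] hm; first by rewrite !take0.
case/tupleP: z1 => a1 w1; case/tupleP: z2 => a2 w2.
rewrite !tree_consE /= !eqseq_cons (inj_eq perm_inj).
by case: (eqVneq a1 a2) => [<-|] //=; apply: (iffLR (tree_autP _) (gs_aut a1)).
Qed.

End TreeAutomorphisms.

Section LabelStabilizer.
Variables (T : finType) (L : eqType) (l : T -> L).

Definition label_stab : {set {perm T}} := [set g : {perm T} | [forall z, l (g z) == l z]].

Lemma group_set_label_stab : group_set label_stab.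
Proof.
apply/group_setP; split; first by rewrite inE; apply/forallP => z; rewrite perm1.
move=> g h; rewrite !inE => /forallP gl /forallP hl.
by apply/forallP => z; rewrite permM (eqP (hl _)) (eqP (gl _)).
Qed.

Canonical label_stab_group := Group group_set_label_stab.

End LabelStabilizer.

Section LabelTransport.
Variables (q : nat) (Lab : finType).

Definition prefix_count n (l : word q n -> Lab) (x : word q n) k lab :=
  #|[set z : word q n | (l z == lab) && (take k z == take k x)]|.

Lemma prefix_count_minn n (l : word q n -> Lab) x k lab :
  prefix_count l x k lab = prefix_count l x (minn k n) lab.
Proof.
apply: eq_card => z; rewrite !inE.
by rewrite !take_min !(@take_oversize _ n) ?size_tuple.
Qed.

Definition counts_agree n (l1 l2 : word q n -> Lab) :=
  forall x y, l1 x = l2 y -> forall k lab, prefix_count l1 x k lab = prefix_count l2 y k lab.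

Definition count_compatible n (l1 l2 : word q n -> Lab) :=
  [/\ counts_agree l1 l1, counts_agree l1 l2 & counts_agree l2 l2].

Lemma compatible_sym n (l1 l2 : word q n -> Lab) : count_compatible l1 l2 -> count_compatible l2 l1.
Proof. by case=> h11 h12 h22; split=> // x y /esym/h12 h k lab; rewrite h. Qed.

Definition sublabel n (l : word q n.+1 -> Lab) (c : 'I_q) (w : word q n) : Lab :=
  l [tuple of c :: w].

Definition sublabels n (l : word q n.+1 -> Lab) c : {set Lab} :=
  [set sublabel l c w | w in [set: word q n]].

Lemma prefix_count_sublabel n (l : word q n.+1 -> Lab) c (w : word q n) k lab :
  prefix_count l [tuple of c :: w] k.+1 lab = prefix_count (sublabel l c) w k lab.
Proof.
rewrite /prefix_count -(card_imset _ (@cons_tuple_inj q n c)); apply: eq_card => z.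
case/tupleP: z => a v; rewrite inE /= eqseq_cons.
case: (eqVneq a c) => [->|ne]; first by rewrite mem_imset ?inE //; exact: cons_tuple_inj.
rewrite andbF; apply/esym/negbTE/imsetP => [[u _]].
by move/(congr1 val) => [] /eqP; rewrite (negbTE ne).
Qed.

Lemma compatible_sublabel n (l1 l2 : word q n.+1 -> Lab) c1 c2 :
  count_compatible l1 l2 -> count_compatible (sublabel l1 c1) (sublabel l2 c2).
Proof.
have sub l l' c c' : counts_agree l l' -> counts_agree (sublabel l c) (sublabel l' c').
  by move=> h x y e k lab; rewrite -!prefix_count_sublabel; apply: h.
by case=> h11 h12 h22; split; apply: sub.
Qed.

Lemma card_thead n (Pr : pred 'I_q) :
  #|[set z : word q n.+1 | Pr (thead z)]| = #|[set c | Pr c]| * #|[set: word q n]|.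
Proof.
have inj : injective (fun p : 'I_q * word q n => [tuple of p.1 :: p.2]).
  by move=> [a w] [b v] /= /(congr1 val) [] -> /val_inj ->.
rewrite -cardsX -(card_imset _ inj); apply: eq_card => z.
case/tupleP: z => a w; rewrite inE theadE; apply/idP/imsetP.
  by move=> Pa; exists (a, w); rewrite // !inE Pa.
by case=> [[b v]]; rewrite !inE /= => /andP[Pb _] /(congr1 val) [] ->.
Qed.

Lemma card_preim_set (T : finType) (l : T -> Lab) (S : {set Lab}) :
  #|[set z | l z \in S]| = \sum_(lab in S) #|[set z | l z == lab]|.
Proof.
rewrite -sum1_card (partition_big l (mem S)) /=; last by move=> z; rewrite inE.
apply: eq_bigr => lab Slab; rewrite -sum1_card; apply: eq_bigl => z; rewrite !inE.
by case: eqP => [->|]; rewrite ?Slab ?andbF.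
Qed.

Lemma prefix_count0 n (l : word q n -> Lab) x lab :
  prefix_count l x 0 lab = #|[set z | l z == lab]|.
Proof. by apply: eq_card => z; rewrite !inE !take0 eqxx andbT. Qed.

Lemma perm_transport (C : eqType) m (f g : 'I_m -> C) a b :
  (forall S, #|[set c | f c == S]| = #|[set c | g c == S]|) -> f a = g b ->
  exists s : {perm 'I_m}, (forall c, g (s c) = f c) /\ s a = b.
Proof.
move=> fibres eab.
have cntE (h : 'I_m -> C) S : count_mem S [tuple h i | i < m] = #|[set c | h c == S]|.
  rewrite /= count_map enumT -size_filter cardE /enum_mem.
  by congr size; apply: eq_filter => c; rewrite !inE.
have /tuple_permP[p ep] : perm_eq [tuple f i | i < m] [tuple g i | i < m].
  by apply/allP => S _ /=; rewrite !cntE fibres.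
have fg i : f i = g (p i).
  have := congr1 (fun t => tnth t i) (val_inj ep : [tuple f i | i < m] = _).
  by rewrite /= !tnth_mktuple.
exists (p * tperm (p a) b)%g; split; last by rewrite permM tpermL.
move=> c; rewrite permM; case: tpermP => [/perm_inj ->|e|_ _]; rewrite ?fg //.
  by rewrite -fg eab.
by rewrite -fg e eab.
Qed.

Section TransportStep.
Variable n : nat.
Hypothesis transport_n : forall (l1 l2 : word q n -> Lab) x y, count_compatible l1 l2 -> l1 x = l2 y ->
  exists g : {perm word q n}, [/\ g \in tree_aut q n, forall z, l2 (g z) = l1 z & g x = y].

Lemma sublabels_eq (l1 l2 : word q n.+1 -> Lab) c1 c2 w1 w2 : count_compatible l1 l2 ->
  sublabel l1 c1 w1 = sublabel l2 c2 w2 -> sublabels l1 c1 = sublabels l2 c2.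
Proof.
move=> hc e; have [g [_ gl _]] := transport_n (compatible_sublabel c1 c2 hc) e.
apply/setP => lab; apply/imsetP/imsetP => [[v _ ->]|[v _ ->]].
  by exists (g v); rewrite ?inE // gl.
by exists (g^-1 v)%g; rewrite ?inE // -gl permKV.
Qed.

Lemma label_in_sublabelsE (l l' : word q n.+1 -> Lab) c S :
  count_compatible l l' -> sublabels l' c = S ->
  [set z | l z \in S] = [set z | sublabels l (thead z) == S].
Proof.
move=> hc <-; apply/setP => z; case/tupleP: z => a w.
rewrite !inE theadE; apply/idP/eqP => [|<-]; last exact: imset_f.
by case/imsetP => w' _ e; exact: sublabels_eq hc e.
Qed.

Lemma card_sublabels_eq (l1 l2 : word q n.+1 -> Lab) x y S :
  count_compatible l1 l2 -> l1 x = l2 y ->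
  #|[set c | sublabels l1 c == S]| = #|[set c | sublabels l2 c == S]|.
Proof.
move=> hc exy.
have [/existsP[c0 h0]|/existsPn none] :=
  boolP [exists c, (sublabels l1 c == S) || (sublabels l2 c == S)]; last first.
  have empty l : (forall c, sublabels l c != S) -> [set c | sublabels l c == S] = set0.
    by move=> h; apply/setP => c; rewrite !inE (negbTE (h c)).
  by rewrite !empty // => c; have /norP[] := none c.
have [h11 h12 h22] := hc; have c21 := compatible_sym hc.
have [A1 A2] : [set z | l1 z \in S] = [set z | sublabels l1 (thead z) == S] /\
               [set z | l2 z \in S] = [set z | sublabels l2 (thead z) == S].
  case/orP: h0 => /eqP h0; split.
  - exact: label_in_sublabelsE (And3 h11 h11 h11) h0.
  - exact: label_in_sublabelsE c21 h0.
  - exact: label_in_sublabelsE hc h0.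
  - exact: label_in_sublabelsE (And3 h22 h22 h22) h0.
have : #|[set z | l1 z \in S]| = #|[set z | l2 z \in S]|.
  rewrite !card_preim_set; apply: eq_bigr => lab _.
  by rewrite -(prefix_count0 l1 x) -(prefix_count0 l2 y); apply: h12.
rewrite A1 A2 (@card_thead n (fun c => sublabels l1 c == S)).
rewrite (@card_thead n (fun c => sublabels l2 c == S)) => /eqP; rewrite eqn_pmul2r => [/eqP //|].
by apply/card_gt0P; exists (behead_tuple x); rewrite inE.
Qed.

Lemma transport_step (l1 l2 : word q n.+1 -> Lab) x y : count_compatible l1 l2 -> l1 x = l2 y ->
  exists g : {perm word q n.+1}, [/\ g \in tree_aut q n.+1, forall z, l2 (g z) = l1 z & g x = y].
Proof.
move=> hc exy; have fibres S := card_sublabels_eq S hc exy.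
case/tupleP: x exy => a x exy; case/tupleP: y exy => b y exy.
have [s [hs sa]] := perm_transport fibres (sublabels_eq hc exy : sublabels l1 a = _).
have hg c : exists g : {perm word q n}, [/\ g \in tree_aut q n,
    forall w, sublabel l2 (s c) (g w) = sublabel l1 c w & c = a -> g x = y].
  have [w' [ew' w'y]] : exists w', sublabel l1 c x = sublabel l2 (s c) w' /\ (c = a -> w' = y).
    case: (eqVneq c a) => [->|ne]; first by exists y; rewrite sa.
    have : sublabel l1 c x \in sublabels l2 (s c) by rewrite hs; exact: imset_f.
    by case/imsetP => w' _ e; exists w'; split => // /eqP; rewrite (negbTE ne).
  have [g [g_aut gl gx]] := transport_n (compatible_sublabel c (s c) hc) ew'.
  by exists g; split => // ca; rewrite gx w'y.
have [gs hgs] := fin_all_exists hg.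
exists (tree_cons s gs); split.
- by apply: tree_cons_aut => c; case: (hgs c).
- by case/tupleP => c w; rewrite tree_consE; case: (hgs c) => _ gl _; exact: gl.
- by rewrite tree_consE sa; case: (hgs a) => _ _ ->.
Qed.

End TransportStep.

Lemma label_transport n (l1 l2 : word q n -> Lab) x y : count_compatible l1 l2 -> l1 x = l2 y ->
  exists g : {perm word q n}, [/\ g \in tree_aut q n, forall z, l2 (g z) = l1 z & g x = y].
Proof.
elim: n l1 l2 x y => [|n IH] l1 l2 x y hc exy; last exact: transport_step.
exists 1%g; split; first exact: group1.
- by move=> z; rewrite perm1; move: exy; rewrite (tuple0 z) (tuple0 x) (tuple0 y).
- by rewrite perm1 (tuple0 x) (tuple0 y).
Qed.

End LabelTransport.

Lemma orbit_tree_aut_label_stab q n (Lab : finType) (l : word q n -> Lab) x :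
  counts_agree l l ->
  orbit 'P (tree_aut_group q n :&: label_stab_group l)%G x = [set y | l y == l x].
Proof.
move=> hl; apply/setP => y; rewrite inE; apply/orbitP/eqP => [[g]|lyx].
  by rewrite !inE => /andP[_ /forallP/(_ x)/eqP <-] <-.
have [g [g_aut gl gx]] := label_transport (And3 hl hl hl) (esym lyx).
by exists g; rewrite // in_setI g_aut inE; apply/forallP => z; rewrite gl.
Qed.

Section PrefixMeans.
Variables (R : numFieldType) (q n : nat).
Local Open Scope ring_scope.

Definition pref_class k (x : word q n) := [set z : word q n | take k z == take k x].

Definition prefix_mean k (g : word q n -> R) x :=
  #|pref_class k x|%:R^-1 * \sum_(z in pref_class k x) g z.

Definition prefix_mean_diff a g x :=
  prefix_mean a g x - (if a is a'.+1 then prefix_mean a' g x else 0).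

Lemma pref_class_refl k x : x \in pref_class k x.
Proof. by rewrite inE. Qed.

Lemma pref_classC k x z : (z \in pref_class k x) = (x \in pref_class k z).
Proof. by rewrite !inE eq_sym. Qed.

Lemma pref_class_eq k x z : z \in pref_class k x -> pref_class k z = pref_class k x.
Proof. by rewrite inE => /eqP e; apply/setP => w; rewrite !inE e. Qed.

Lemma pref_class_subset k1 k2 x : (k1 <= k2)%N -> pref_class k2 x \subset pref_class k1 x.
Proof.
move=> h; apply/subsetP => z; rewrite !inE => /eqP e.
by rewrite -(take_takel _ h) e take_takel.
Qed.

Lemma card_pref_class_gt0 k x : (0 < #|pref_class k x|)%N.
Proof. by apply/card_gt0P; exists x; exact: pref_class_refl. Qed.

Lemma card_pref_class_neq0 k x : #|pref_class k x|%:R != 0 :> R.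
Proof. by rewrite pnatr_eq0 -lt0n card_pref_class_gt0. Qed.

Lemma card_pref_class k x : (k <= n)%N -> #|pref_class k x| = (q ^ (n - k))%N.
Proof.
move=> hk; pose ext (w : (n - k).-tuple 'I_q) : word q n := insubd x (take k x ++ w).
have size_take : size (take k x) = k by rewrite size_takel ?size_tuple.
have ext_val w : val (ext w) = take k x ++ w.
  by rewrite insubdK // unfold_in /= size_cat size_tuple size_take subnKC.
have ext_inj : injective ext.
  move=> w1 w2 /(congr1 (fun z : word q n => drop k z)); rewrite !ext_val.
  by rewrite !drop_size_cat //; exact: val_inj.
have -> : pref_class k x = ext @: setT.
  apply/setP => z; rewrite inE; apply/eqP/imsetP => [e|[w _ ->]].
    have sz : size (drop k z) == (n - k)%N by rewrite size_drop size_tuple.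
    by exists (Tuple sz) => //; apply: val_inj; rewrite ext_val /= -e cat_take_drop.
  by rewrite ext_val take_size_cat.
by rewrite card_imset // cardsT card_tuple card_ord.
Qed.

Lemma prefix_mean_in k g x z : z \in pref_class k x -> prefix_mean k g z = prefix_mean k g x.
Proof. by move=> h; rewrite /prefix_mean (pref_class_eq h). Qed.

Lemma prefix_mean_cst k c x : prefix_mean k (fun _ => c) x = c.
Proof.
rewrite /prefix_mean sumr_const -[c *+ _]mulr_natr mulrCA mulVf ?mulr1 //.
exact: card_pref_class_neq0.
Qed.

Lemma prefix_meanB k g h x :
  prefix_mean k (fun z => g z - h z) x = prefix_mean k g x - prefix_mean k h x.
Proof. by rewrite /prefix_mean sumrB mulrBr. Qed.

Lemma prefix_meann g x : prefix_mean n g x = g x.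
Proof.
rewrite /prefix_mean (_ : pref_class n x = [set x]); last first.
  by apply/setP => z; rewrite !inE !take_oversize ?size_tuple.
by rewrite cards1 big_set1 invr1 mul1r.
Qed.

Lemma prefix_mean_mean a b g x :
  prefix_mean a (prefix_mean b g) x = prefix_mean (minn a b) g x.
Proof.
case: (leqP a b) => hab; last first.
  rewrite [LHS]/prefix_mean (eq_bigr (fun _ => prefix_mean b g x)); last first.
    by move=> z hz; apply: prefix_mean_in; apply: subsetP (pref_class_subset _ (ltnW hab)) _ hz.
  by rewrite sumr_const -[X in _ * X]mulr_natr mulrCA mulVf ?mulr1 ?card_pref_class_neq0.
rewrite /prefix_mean; congr (_ * _).
rewrite (eq_bigr (fun z => \sum_(w in pref_class b z) #|pref_class b z|%:R^-1 * g w)); last first.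
  by move=> z _; rewrite big_distrr.
rewrite (exchange_big_dep (mem (pref_class a x))) /=; last first.
  move=> z w hz hw.
  by rewrite -(pref_class_eq hz); apply: subsetP (pref_class_subset _ hab) _ hw.
apply: eq_bigr => w hw.
rewrite (eq_bigl (mem (pref_class b w))); last first.
  move=> z; rewrite /= [w \in _]pref_classC andb_idl // => hz.
  by rewrite -(pref_class_eq hw); apply: subsetP (pref_class_subset _ hab) _ hz.
rewrite (eq_bigr (fun _ => #|pref_class b w|%:R^-1 * g w)); last first.
  by move=> z hz; rewrite (pref_class_eq hz).
by rewrite sumr_const -[LHS]mulr_natr mulrAC mulVf ?mul1r ?card_pref_class_neq0.
Qed.

Lemma prefix_mean_diffE k a g x :
  prefix_mean k (prefix_mean_diff a g) x = if (a <= k)%N then prefix_mean_diff a g x else 0.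
Proof.
rewrite /prefix_mean_diff prefix_meanB prefix_mean_mean.
case: a => [|a]; first by rewrite prefix_mean_cst minn0.
rewrite prefix_mean_mean; case: leqP => h.
  by rewrite (minn_idPl (leqW h)) subrr.
by rewrite (minn_idPr h).
Qed.

Lemma sum_prefix_mean_diff m g x : \sum_(0 <= a < m.+1) prefix_mean_diff a g x = prefix_mean m g x.
Proof.
elim: m => [|m IH]; first by rewrite big_nat1 /prefix_mean_diff subr0.
by rewrite big_nat_recr //= IH /prefix_mean_diff addrC subrK.
Qed.

Lemma prefix_mean_indicator (Lab : finType) (l : word q n -> Lab) lab k x :
  prefix_mean k (fun z => (l z == lab)%:R) x =
  #|pref_class k x|%:R^-1 * (prefix_count l x k lab)%:R.
Proof.
rewrite /prefix_mean -natr_sum /prefix_count; congr (_ * _%:R).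
rewrite -sum1_card big_mkcond [RHS]big_mkcond; apply: eq_bigr => z _.
by rewrite !inE andbC; case: (_ == _); case: (_ == _).
Qed.

End PrefixMeans.

Lemma tdist_leE q n (x z : word q n) i : (i <= n)%N ->
  (tdist x z <= i)%N = (z \in pref_class (n - i) x).
Proof.
move=> hi; rewrite inE /tdist; set M := \max_(m < n.+1 | _) _.
apply/idP/idP => h.
  have hM : take M x == take M z.
    apply: (big_ind (fun M => take M x == take M z)) => //; first by rewrite !take0.
    by move=> u v hu hv; case: leqP.
  have hle : (n - i <= M)%N by lia.
  by rewrite -(take_takel _ hle) -(eqP hM) take_takel // eq_sym.
have lt_n : (n - i < n.+1)%N by rewrite ltnS leq_subr.
have : (n - i <= M)%N by apply: (leq_bigmax_cond (Ordinal lt_n)); rewrite /= eq_sym.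
lia.
Qed.

Section InsectSpectrum.
Variables (R : realFieldType) (q n : nat).
Hypotheses (hq : (2 <= q)%N) (hn : (1 <= n)%N).
Local Open Scope ring_scope.

(* The d(x,y) <= 1 case of the definition is the d(x,y) = 1 case of the
   general formula, so p(x,z) = sum of iterm i over i >= d(x,z), i >= 1. *)
Lemma insect_pE (x z : word q n) : insect_p R x z =
  \sum_(1 <= i < n.+1) (if z \in pref_class (n - i) x then iterm R q n i else 0).
Proof.
rewrite (eq_big_nat _ _ (F2 := fun i => if (tdist x z <= i)%N then iterm R q n i else 0)); last first.
  by move=> i /andP[_ hi]; rewrite tdist_leE.
rewrite /insect_p /=; case: ifP => h1.
  rewrite [RHS]big_ltn // h1 (eq_big_nat _ _ (F2 := iterm R q n)); last first.
    by move=> i /andP[hi _]; rewrite ifT //; lia.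
  by rewrite /iterm (big_geq (leqnn 1)) expr1 mulr1.
have hd : (tdist x z <= n)%N by rewrite /tdist leq_subr.
rewrite [RHS](big_cat_nat _ (n := tdist x z)) /=; [|lia|lia].
rewrite [X in _ = X + _]big1_seq ?add0r => [|i]; last first.
  by rewrite mem_index_iota => /andP[_ hi]; rewrite ifF //; lia.
by apply: eq_big_nat => i /andP[hi _]; rewrite hi.
Qed.

Lemma ialpha_gt0_lt1 j : (1 <= j < n)%N -> 0 < ialpha R q n j < 1.
Proof.
move=> /andP[j1 jn]; rewrite /ialpha jn.
have ha : 1 < (q%:R ^+ j : R).
  rewrite -natrX ltr1n; apply: (leq_trans hq); rewrite -{1}(expn1 q).
  by apply: leq_pexp2l => //; lia.
have hq' : 2 <= (q%:R : R) by rewrite ler_nat.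
rewrite exprSr; move: ha; move: (q%:R ^+ j) => a ha.
have hb0 : 0 < a * q%:R - 1 by nra.
apply/andP; split; first by apply: divr_gt0; lra.
by rewrite ltr_pdivrMr // mul1r; nra.
Qed.

Lemma iterm_gt0 i : (1 <= i <= n)%N -> 0 < iterm R q n i.
Proof.
move=> /andP[i1 iN]; rewrite /iterm; apply: mulr_gt0; first apply: mulr_gt0.
- by rewrite invr_gt0 exprn_gt0 // ltr0n; lia.
- rewrite big_nat; apply: prodr_gt0 => k /andP[k1 ki].
  by have /ialpha_gt0_lt1/andP[] : (1 <= k < n)%N by lia.
- rewrite subr_gt0; case: (ltnP i n) => h; last by rewrite /ialpha ltnNge h /= ltr01.
  by have /ialpha_gt0_lt1/andP[] : (1 <= i < n)%N by lia.
Qed.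

Definition insect_weight i := iterm R q n i * (q ^ i)%:R.

Definition insect_eigenvalue a :=
  \sum_(1 <= i < n.+1) (if (a <= n - i)%N then insect_weight i else 0).

Lemma insect_p_prefix_mean (x : word q n) h :
  \sum_z insect_p R x z * h z = \sum_(1 <= i < n.+1) insect_weight i * prefix_mean (n - i) h x.
Proof.
under eq_bigr => z _ do rewrite insect_pE mulr_suml.
rewrite exchange_big; apply: eq_big_nat => i /andP[_ hi].
rewrite /insect_weight /prefix_mean card_pref_class ?leq_subr // subKn //.
have qi_neq0 : (q ^ i)%:R != 0 :> R by rewrite pnatr_eq0 expn_eq0; lia.
rewrite mulrA mulfK // big_distrr [RHS]big_mkcond; apply: eq_bigr => z _.
by case: ifP; rewrite ?mul0r.
Qed.

Lemma insect_p_eigen a g (x : word q n) :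
  \sum_z insect_p R x z * prefix_mean_diff a g z = insect_eigenvalue a * prefix_mean_diff a g x.
Proof.
rewrite insect_p_prefix_mean /insect_eigenvalue big_distrl /=; apply: eq_bigr => i _.
by rewrite prefix_mean_diffE; case: ifP; rewrite ?mulr0 ?mul0r.
Qed.

Lemma insect_eigenvalue_lt a b : (a < b <= n)%N -> insect_eigenvalue b < insect_eigenvalue a.
Proof.
move=> /andP[ab bn].
have wpos i : (1 <= i <= n)%N -> 0 < insect_weight i.
  by move=> hi; rewrite mulr_gt0 ?iterm_gt0 // ltr0n expn_gt0; apply/orP; left; lia.
suff : insect_eigenvalue b + insect_weight (n - a) <= insect_eigenvalue a.
  have : 0 < insect_weight (n - a) by apply: wpos; lia.
  lra.
have -> : insect_weight (n - a) =
    \sum_(1 <= i < n.+1) (if i == (n - a)%N then insect_weight i else 0).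
  by rewrite -big_mkcond big_nat1_eq ifT //; lia.
rewrite /insect_eigenvalue -big_split /=; apply: ler_sum_nat => i /andP[i1 iN].
have wi : 0 < insect_weight i by apply: wpos; lia.
case: eqP => [->|_]; first by rewrite ifF ?ifT ?add0r //; lia.
rewrite addr0; case: ifP => hb; first by rewrite ifT //; lia.
by case: ifP => _; rewrite ?lexx ?ltW.
Qed.

Lemma insect_eigenvalue_inj : {in index_iota 0 n.+1 &, injective insect_eigenvalue}.
Proof.
move=> a b; rewrite !mem_index_iota => ha hb e.
have neq c d : (c < d <= n)%N -> insect_eigenvalue c != insect_eigenvalue d.
  by move/insect_eigenvalue_lt; rewrite lt_def => /andP[].
case: (ltngtP a b) => // h; exfalso.
- have /neq : (a < b <= n)%N by lia.
  by rewrite e eqxx.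
- have /neq : (b < a <= n)%N by lia.
  by rewrite e eqxx.
Qed.

End InsectSpectrum.

Section EigenComponents.
Variables (R : fieldType) (T : finType) (rel : T -> T -> Prop) (K : T -> T -> R).
Local Open Scope ring_scope.
Hypothesis K_homo : forall g : T -> R, {homo g : x y / rel x y >-> x = y} ->
  {homo (fun x => \sum_z K x z * g z) : x y / rel x y >-> x = y}.

(* If K preserves rel-invariance, so does K - mu_b; applied to a sum of
   eigenfunctions it kills the b-component and rescales the others, which
   gives an induction on the number of distinct eigenvalues. *)
Lemma eigen_components_homo (mu : nat -> R) (s : seq nat) (G : nat -> T -> R) :
  uniq s -> {in s &, injective mu} ->
  (forall a x, a \in s -> \sum_z K x z * G a z = mu a * G a x) ->
  {homo (fun x => \sum_(a <- s) G a x) : x y / rel x y >-> x = y} ->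
  forall a, a \in s -> {homo G a : x y / rel x y >-> x = y}.
Proof.
elim: s G => [|b s IH] G //= /andP[bs us] mu_inj eigen sum_homo.
have mu_neq a : a \in s -> mu a - mu b != 0.
  move=> ha; rewrite subr_eq0; apply: contraNneq bs => /mu_inj <-; rewrite ?inE ?ha ?orbT //.
  by rewrite eqxx.
pose G' a x := (mu a - mu b) * G a x.
have G'_homo : forall a, a \in s -> {homo G' a : x y / rel x y >-> x = y}.
  apply: IH => // [a1 a2 h1 h2|a' x ha'|x y hxy]; first by apply: mu_inj; rewrite inE ?h1 ?h2 orbT.
    under eq_bigr => z _ do rewrite mulrCA.
    by rewrite -mulr_sumr eigen ?inE ?ha' ?orbT // mulrCA.
  have shift w : \sum_(a <- s) G' a w =
      \sum_z K w z * (\sum_(a <- b :: s) G a z) - mu b * \sum_(a <- b :: s) G a w.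
    have -> : \sum_z K w z * (\sum_(a <- b :: s) G a z) = \sum_(a <- b :: s) mu a * G a w.
      under eq_bigr => z _ do rewrite big_distrr.
      by rewrite exchange_big; apply: eq_big_seq => c hc; exact: eigen.
    rewrite !big_cons mulrDr big_distrr /= opprD addrACA subrr add0r -sumrB.
    by apply: eq_bigr => c _; rewrite /G' mulrBl.
  by rewrite !shift (K_homo sum_homo hxy) (sum_homo _ _ hxy).
have G_homo a : a \in s -> {homo G a : x y / rel x y >-> x = y}.
  by move=> ha x y /(G'_homo a ha); apply: mulfI; exact: mu_neq.
move=> a; rewrite inE => /orP[/eqP ->|]; last exact: G_homo.
move=> x y hxy; have := sum_homo x y hxy; rewrite !big_cons.
by rewrite (eq_big_seq (fun a => G a y)) => [/addIr|c hc]; last exact: G_homo.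
Qed.

End EigenComponents.

Section Lumpability.
Variables (R : realFieldType) (q n : nat) (P : {set {set word q n}}).
Hypotheses (hq : (2 <= q)%N) (hn : (1 <= n)%N).
Hypotheses (partP : partition P [set: word q n]) (lumpP : lumpable R P).
Local Open Scope ring_scope.

Lemma lumpable_homo (g : word q n -> R) :
  {homo g : x y / pblock P x = pblock P y >-> x = y} ->
  {homo (fun x => \sum_z insect_p R x z * g z) : x y / pblock P x = pblock P y >-> x = y}.
Proof.
move=> g_homo u v huv; have /and3P[/eqP coverP trivP _] := partP.
have in_cover w : w \in cover P by rewrite coverP inE.
have blocks w : \sum_z insect_p R w z * g z = \sum_(L in P) \sum_(z in L) insect_p R w z * g z.
  by rewrite -big_trivIset // coverP; apply: eq_bigl => z; rewrite inE.
rewrite !blocks; apply: eq_bigr => L LP.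
have [->|[w0 Lw0]] := set_0Vmem L; first by rewrite !big_set0.
have gL z : z \in L -> g z = g w0.
  by move=> Lz; apply: g_homo; rewrite (def_pblock trivP LP Lz) (def_pblock trivP LP Lw0).
rewrite (eq_bigr (fun z => insect_p R u z * g w0)) => [|z /gL -> //].
rewrite [RHS](eq_bigr (fun z => insect_p R v z * g w0)) => [|z /gL -> //].
rewrite -!mulr_suml; congr (_ * _); apply: (lumpP (pblock_mem (in_cover u)) LP).
- by rewrite mem_pblock.
- by rewrite huv mem_pblock.
Qed.

Lemma lumpable_counts_agree : counts_agree (pblock P) (pblock P).
Proof.
move=> x y exy k lab; rewrite !(prefix_count_minn _ _ k).
have k_le : (minn k n <= n)%N by rewrite geq_minr.
move: (minn k n) k_le => {}k k_le.
pose f z : R := (pblock P z == lab)%:R.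
have diff_homo a : a \in index_iota 0 n.+1 ->
    {homo prefix_mean_diff a f : u v / pblock P u = pblock P v >-> u = v}.
  apply: (@eigen_components_homo _ _ _ _ lumpable_homo (insect_eigenvalue R q n) _
            (fun a => prefix_mean_diff a f) (iota_uniq 0 n.+1)).
  - exact: insect_eigenvalue_inj.
  - by move=> c u _; exact: insect_p_eigen.
  - by move=> u v huv; rewrite !sum_prefix_mean_diff !prefix_meann /f huv.
have : prefix_mean k f x = prefix_mean k f y.
  rewrite -!sum_prefix_mean_diff; apply: eq_big_nat => a ha.
  by apply: diff_homo exy; rewrite mem_index_iota; lia.
have qk_neq0 : ((q ^ (n - k))%:R : R)^-1 != 0 by rewrite invr_eq0 pnatr_eq0 expn_eq0; lia.
rewrite !prefix_mean_indicator !card_pref_class //.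
by move/(mulfI qk_neq0)/eqP; rewrite eqr_nat => /eqP.
Qed.

End Lumpability.

Unset Implicit Arguments.
Theorem theorem15 (R : realFieldType) (q n : nat) (hq : (2 <= q)%N) (hn : (1 <= n)%N)
  (P : {set {set word q n}}) :
  partition P [set: word q n] -> lumpable R P ->
  exists K : {group {perm word q n}},
    K \subset tree_aut q n /\
    [set orbit 'P K x | x in [set: word q n]] = P.
Proof.
move=> partP lumpP; have /and3P[/eqP coverP trivP set0P] := partP.
have in_cover x : x \in cover P by rewrite coverP inE.
have orbitE x : orbit 'P (tree_aut_group q n :&: label_stab_group (pblock P))%G x = pblock P x.
  rewrite orbit_tree_aut_label_stab; last exact: lumpable_counts_agree hq hn partP lumpP.
  by apply/setP => y; rewrite inE eq_sym eq_pblock.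
exists (tree_aut_group q n :&: label_stab_group (pblock P))%G; split; first exact: subsetIl.
apply/setP => B; apply/imsetP/idP => [[x _ ->]|BP]; first by rewrite orbitE pblock_mem.
have /set0Pn[x Bx] : B != set0 by apply: contraNneq set0P => <-.
by exists x; rewrite ?inE // orbitE (def_pblock trivP BP Bx).
Qed.
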